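(* Let $n\ge1$, $d=2^n$. For all unitaries $U,V\in\mathcal{U}(d)$, $$|\mathcal{M}_{lin}(U)-\mathcal{M}_{lin}(V)|\le\frac{8d}{4+d}\,\|U-V\|_2,$$ where $\|\cdot\|_2$ is the Frobenius norm; in particular $\mathcal{M}_{lin}$ is Lipschitz on $\mathcal{U}(d)$ with a constant bounded independently of $d$.
   Context: $\mathcal{P}_n$ is the set of the $4^n$ $n$-qubit Pauli strings $\sigma_1\otimes\cdots\otimes\sigma_n$, $\sigma_i\in\{I,X,Y,Z\}$. For a pure state, $M_{lin}(|\psi\rangle)=1-d^{-1}\sum_{P\in\mathcal{P}_n}\langle\psi|P|\psi\rangle^4$. $\mathrm{STAB}$ is the finite set of $n$-qubit pure stabilizer states (states $C|0\rangle^{\otimes n}$ with $C$ a Clifford unitary, i.e. $CPC^\dagger\in\{\pm1,\pm i\}\mathcal{P}_n$ for all $P$). $\mathcal{M}_{lin}(U)=\frac{1}{|\mathrm{STAB}|}\sum_{|\psi\rangle\in\mathrm{STAB}}M_{lin}(U|\psi\rangle)$. *)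

From mathcomp Require Import all_boot all_algebra complex.
From mathcomp Require Import reals.
Set Implicit Arguments. Unset Strict Implicit. Unset Printing Implicit Defensive.
Import GRing.Theory Num.Theory.
Local Open Scope ring_scope.
Local Open Scope complex_scope.

Section QDefs.
Variable R : realType.
Local Notation C := R[i].

Definition adjmx m k (A : 'M[C]_(m, k)) : 'M[C]_(k, m) :=
  (map_mx (fun z : C => z^*) A)^T.

Definition unitary d (U : 'M[C]_d) : Prop := adjmx U *m U = 1%:M.

(* single-qubit Paulis indexed by 'I_4 : 0 = I, 1 = X, 2 = Y, 3 = Z *)
Definition pauli1 (a : 'I_4) : 'M[C]_2 :=
  \matrix_(i < 2, j < 2)
   match val a with
   | 0 => if i == j then 1 else 0
   | 1 => if i == j then 0 else 1
   | 2 => if i == j then 0 else (if val i == 0 then - 'i else 'i)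
   | _ => if i == j then (if val i == 0 then 1 else -1) else 0
   end.

(* k-th bit of a basis index of (C^2)^{\otimes n} *)
Definition qbit n (i : 'I_(2 ^ n)) (k : 'I_n) : 'I_2 :=
  inord (odd (i %/ 2 ^ k)).

(* Pauli string sigma_{s 0} (x) ... (x) sigma_{s (n-1)}, written entrywise:
   the (i,j) entry of a Kronecker product is the product of the entries. *)
Definition pauli n (s : {ffun 'I_n -> 'I_4}) : 'M[C]_(2 ^ n) :=
  \matrix_(i, j) \prod_(k < n) pauli1 (s k) (qbit i k) (qbit j k).

Definition clifford n (U : 'M[C]_(2 ^ n)) : Prop :=
  unitary U /\
  forall s : {ffun 'I_n -> 'I_4}, exists (t : {ffun 'I_n -> 'I_4}) (e : 'I_4),
    U *m pauli s *m adjmx U = ('i ^+ e) *: pauli t.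

Definition ket0 n : 'cV[C]_(2 ^ n) := \col_i (if val i == 0%N then 1 else 0).

Definition stab_state n (psi : 'cV[C]_(2 ^ n)) : Prop :=
  exists U, clifford U /\ psi = U *m ket0 n.

(* projector |psi><psi| : identifies state vectors up to global phase *)
Definition proj d (psi : 'cV[C]_d) : 'M[C]_d := psi *m adjmx psi.

Definition expect d (psi : 'cV[C]_d) (P : 'M[C]_d) : C :=
  (adjmx psi *m P *m psi) 0 0.

Definition Mlin n (psi : 'cV[C]_(2 ^ n)) : C :=
  1 - (2 ^ n)%:R^-1 * \sum_(s : {ffun 'I_n -> 'I_4}) expect psi (pauli s) ^+ 4.

Definition enum_STAB n (S : seq 'cV[C]_(2 ^ n)) : Prop :=
  [/\ forall psi, psi \in S -> stab_state psi,
      forall phi, stab_state phi -> exists2 psi, psi \in S & proj phi = proj psi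
    & uniq (map (@proj _) S)].

Definition MlinU n (S : seq 'cV[C]_(2 ^ n)) (U : 'M[C]_(2 ^ n)) : C :=
  (size S)%:R^-1 * \sum_(psi <- S) Mlin (U *m psi).

Definition frob m k (A : 'M[C]_(m, k)) : C :=
  sqrtC (\sum_i \sum_j `|A i j| ^+ 2).

End QDefs.

(* For a unit vector v write a_s = <v|P_s|v> for its Pauli expectations.  They are real,
   a_0 = 1 and a_s^2 <= 1, and since the Pauli strings are an orthogonal basis,
   sum_s |tr (P_s X)|^2 = d ||X||_F^2; for X = |v><v| this gives sum_s a_s^2 = d.
   For phi = U psi and chi = V psi with expectations a and b, an elementary quartic
   inequality gives (sum_s (a_s^4 - b_s^4))^2 <= 4 (d - 1) sum_s (a_s - b_s)^2, and the
   same Parseval identity for X = |phi><phi| - |chi><chi| gives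
   sum_s (a_s - b_s)^2 = d ||X||_F^2 <= 2 d ||phi - chi||^2 <= 2 d ||U - V||_F^2.
   So |M_lin(phi) - M_lin(chi)| <= sqrt (8 (d - 1) / d) ||U - V||_F <= 8d/(4+d) ||U - V||_F,
   and the bound survives averaging over STAB. *)

From mathcomp Require Import all_boot all_algebra complex.
From mathcomp Require Import reals order.
From mathcomp.algebra_tactics Require Import ring lra.
Set Implicit Arguments. Unset Strict Implicit. Unset Printing Implicit Defensive.
Import Order.TTheory GRing.Theory Num.Theory.
Local Open Scope ring_scope.
Local Open Scope complex_scope.

Section CauchySchwarz.
Variable R : numDomainType.

Lemma Lagrange_identity (I : finType) (u v : I -> R) :
  \sum_i \sum_j (u i * v j - u j * v i) ^+ 2 =
  2 * ((\sum_i u i ^+ 2) * (\sum_i v i ^+ 2) - (\sum_i u i * v i) ^+ 2).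
Proof.
have expand i j : (u i * v j - u j * v i) ^+ 2 =
    u i ^+ 2 * v j ^+ 2 + v i ^+ 2 * u j ^+ 2 - 2 * ((u i * v i) * (u j * v j)).
  by ring.
under eq_bigr do under eq_bigr do rewrite expand.
under eq_bigr do rewrite big_split /= big_split /= sumrN -!mulr_sumr.
rewrite big_split /= big_split /= sumrN -!mulr_suml -!mulr_sumr -!mulr_suml.
rewrite -expr2; ring.
Qed.

Lemma sqr_sum_mul_le (I : finType) (u v : I -> R) :
  (forall i, u i \is Num.real) -> (forall i, v i \is Num.real) ->
  (\sum_i u i * v i) ^+ 2 <= (\sum_i u i ^+ 2) * (\sum_i v i ^+ 2).
Proof.
move=> ur vr; rewrite -subr_ge0 -(pmulr_rge0 _ (ltr0Sn _ 1)) -Lagrange_identity.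
apply: sumr_ge0 => i _; apply: sumr_ge0 => j _.
by apply: real_exprn_even_ge0; rewrite // rpredB ?rpredM.
Qed.

Lemma sqr_norm_sum_mul_le (I : finType) (u v : I -> R) :
  `|\sum_i u i * v i| ^+ 2 <= (\sum_i `|u i| ^+ 2) * (\sum_i `|v i| ^+ 2).
Proof.
apply: le_trans (sqr_sum_mul_le (fun i => normr_real (u i)) (fun i => normr_real (v i))).
rewrite ler_sqr ?nnegrE ?sumr_ge0 // => [|i _]; last by rewrite mulr_ge0.
by apply: le_trans (ler_norm_sum _ _ _) _; under eq_bigr do rewrite normrM.
Qed.

End CauchySchwarz.

Section RealBounds.
Variable R : realFieldType.

Lemma sqr_addr_mul_le (a b : R) : a ^+ 2 <= 1 -> b ^+ 2 <= 1 ->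
  ((a + b) * (a ^+ 2 + b ^+ 2 - 1)) ^+ 2 <= 2 * (a ^+ 2 + b ^+ 2).
Proof.
move=> ha hb; rewrite exprMn -[leRHS]mulr1.
have ha0 := sqr_ge0 a; have hb0 := sqr_ge0 b.
apply: ler_pM; rewrite ?sqr_ge0 //; first by have := sqr_ge0 (a - b); lra.
set t := a ^+ 2 + b ^+ 2; have : 0 <= t <= 2 by rewrite /t; lra.
case/andP => ht0 ht2; nra.
Qed.

(* a^4 - b^4 = (a - b) (a + b) (a^2 + b^2 - 1) + (a^2 - b^2): the last terms cancel in the
   sum, the [i0] term of the first one vanishes, and Cauchy-Schwarz bounds the rest. *)
Lemma sum_subX4_sqr_le (I : finType) (i0 : I) (a b : I -> R) (d : R) :
  a i0 = 1 -> b i0 = 1 -> (forall i, a i ^+ 2 <= 1) -> (forall i, b i ^+ 2 <= 1) ->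
  \sum_i a i ^+ 2 = d -> \sum_i b i ^+ 2 = d ->
  (\sum_i (a i ^+ 4 - b i ^+ 4)) ^+ 2 <= 4 * (d - 1) * \sum_i (a i - b i) ^+ 2.
Proof.
move=> a0 b0 a_le1 b_le1 sum_a sum_b.
pose y i := if i == i0 then 0 else (a i + b i) * (a i ^+ 2 + b i ^+ 2 - 1).
have -> : \sum_i (a i ^+ 4 - b i ^+ 4) = \sum_i (a i - b i) * y i.
  have factor i : a i ^+ 4 - b i ^+ 4 =
      (a i - b i) * ((a i + b i) * (a i ^+ 2 + b i ^+ 2 - 1)) + (a i ^+ 2 - b i ^+ 2).
    by ring.
  under eq_bigr do rewrite factor.
  rewrite big_split /= sumrB sum_a sum_b subrr addr0.
  by apply: eq_bigr => i _; rewrite /y; case: eqP => // ->; rewrite a0 b0 subrr !mul0r.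
have sum_y : \sum_i y i ^+ 2 <= 4 * (d - 1).
  have sumD1 c : \sum_i c i ^+ 2 = d -> c i0 = 1 -> \sum_(i | i != i0) c i ^+ 2 = d - 1.
    by move=> <- c0; rewrite [in RHS](bigD1 i0) //= c0 expr1n addrC addrK.
  rewrite (bigD1 i0) //= /y eqxx expr0n add0r.
  have -> : 4 * (d - 1) = \sum_(i | i != i0) 2 * (a i ^+ 2 + b i ^+ 2).
    by rewrite -mulr_sumr big_split /= !sumD1 //; ring.
  by apply: ler_sum => i /negbTE ->; apply: sqr_addr_mul_le.
rewrite mulrC; apply: le_trans (sqr_sum_mul_le (fun=> num_real _) (fun=> num_real _)) _.
by apply: ler_wpM2l => //; apply: sumr_ge0 => i _; apply: sqr_ge0.
Qed.

Lemma lipschitz_const_sqr_le (d D F : R) : 1 <= d -> 0 <= F ->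
  D ^+ 2 <= 8 * (d - 1) * d * F -> (D / d) ^+ 2 <= (8 * d / (4 + d)) ^+ 2 * F.
Proof.
move=> hd hF hD; have d0 : 0 < d by lra.
have d4 : 0 < 4 + d by lra.
have hK : 8 * (d - 1) <= (8 * d / (4 + d)) ^+ 2 * d.
  rewrite expr_div_n mulrAC ler_pdivlMr ?exprn_gt0 //.
  have e_ge0 : 0 <= d - 1 by lra.
  by have := mulr_ge0 (mulr_ge0 e_ge0 e_ge0) e_ge0; nra.
rewrite [leLHS]expr_div_n ler_pdivrMr ?exprn_gt0 //; apply: le_trans hD _.
have -> : 8 * (d - 1) * d * F = 8 * (d - 1) * (d * F) by ring.
have -> : (8 * d / (4 + d)) ^+ 2 * F * d ^+ 2 = (8 * d / (4 + d)) ^+ 2 * d * (d * F) by ring.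
by rewrite ler_wpM2r // mulr_ge0 // ltW.
Qed.

End RealBounds.

Lemma nat_bits_inj n i j : (i < 2 ^ n)%N -> (j < 2 ^ n)%N ->
  (forall k, (k < n)%N -> odd (i %/ 2 ^ k) = odd (j %/ 2 ^ k)) -> i = j.
Proof.
elim: n i j => [|n IHn] i j hi hj bits_eq.
  by move: hi hj; rewrite expn0 !ltnS !leqn0 => /eqP -> /eqP ->.
have odd_eq := bits_eq 0%N isT; rewrite !expn0 !divn1 in odd_eq.
have half_eq : i./2 = j./2.
  apply: IHn => [||k hk]; rewrite -?divn2 ?ltn_divLR -?expnSr //.
  by have := bits_eq k.+1 hk; rewrite -!divnMA -expnS.
by rewrite -(odd_double_half i) -(odd_double_half j) odd_eq half_eq.
Qed.

Lemma qbit_val n (i : 'I_(2 ^ n)) k : val (qbit i k) = odd (i %/ 2 ^ k).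
Proof. by apply: inordK; rewrite ltnS leq_b1. Qed.

Lemma qbit_inj n (i j : 'I_(2 ^ n)) : (forall k, qbit i k = qbit j k) -> i = j.
Proof.
move=> bits_eq; apply/val_inj/(@nat_bits_inj n) => [||k hk]; rewrite ?ltn_ord //.
by have /(congr1 val) := bits_eq (Ordinal hk); rewrite !qbit_val; case: odd; case: odd.
Qed.

Definition qbits n (i : 'I_(2 ^ n)) : {ffun 'I_n -> 'I_2} := [ffun k => qbit i k].

Lemma qbits_bij n : bijective (@qbits n).
Proof.
apply: inj_card_bij; last by rewrite card_ffun !card_ord.
by move=> i j /ffunP eq_ij; apply: qbit_inj => k; have := eq_ij k; rewrite !ffunE.
Qed.

Lemma sum_qbits n (V : nmodType) (G : {ffun 'I_n -> 'I_2} -> V) :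
  \sum_(i : 'I_(2 ^ n)) G (qbits i) = \sum_b G b.
Proof. by rewrite (reindex (@qbits n)) //; apply: onW_bij; exact: qbits_bij. Qed.

Lemma prod_qbit_eq (K : comPzSemiRingType) n (i j : 'I_(2 ^ n)) :
  \prod_k ((qbit i k == qbit j k)%:R : K) = (i == j)%:R.
Proof.
have [->|neq_ij] := eqVneq i j; first by rewrite big1 // => k _; rewrite eqxx.
have [k neq_k] : exists k, qbit i k != qbit j k.
  apply/existsP; apply: contraR neq_ij => /existsPn eq_ij.
  by rewrite (qbit_inj (fun k => eqP (negPn (eq_ij k)))).
by rewrite (bigD1 k) //= (negbTE neq_k) mul0r.
Qed.

Section Kronecker.
Variable K : comPzSemiRingType.

Definition kronmx n (A : 'I_n -> 'M[K]_2) : 'M[K]_(2 ^ n) :=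
  \matrix_(i, j) \prod_k A k (qbit i k) (qbit j k).

Lemma eq_kronmx n (A B : 'I_n -> 'M[K]_2) : A =1 B -> kronmx A = kronmx B.
Proof.
by move=> eqAB; apply/matrixP => i j; rewrite !mxE; apply: eq_bigr => k _; rewrite eqAB.
Qed.

Lemma kronmx_mul n (A B : 'I_n -> 'M[K]_2) :
  kronmx A *m kronmx B = kronmx (fun k => A k *m B k).
Proof.
apply/matrixP => i j; rewrite !mxE.
pose G (b : {ffun 'I_n -> 'I_2}) := \prod_k (A k (qbit i k) (b k) * B k (b k) (qbit j k)).
rewrite (eq_bigr (fun l => G (qbits l))) => [|l _]; last first.
  by rewrite !mxE -big_split; apply: eq_bigr => k _; rewrite !ffunE.
rewrite sum_qbits /G -(bigA_distr_bigA (fun k c => A k (qbit i k) c * B k c (qbit j k))).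
by apply: eq_bigr => k _; rewrite mxE.
Qed.

Lemma kronmx1 n : kronmx (fun _ : 'I_n => 1%:M) = 1%:M.
Proof.
apply/matrixP => i j; rewrite !mxE -prod_qbit_eq.
by apply: eq_bigr => k _; rewrite mxE.
Qed.

End Kronecker.

Section ComplexMatrices.
Variable R : realType.
Local Notation C := R[i].

Lemma normcK (x : C) : `|x| ^+ 2 = x * x^*.
Proof. exact: normCK. Qed.

Lemma adjmx_mul m k l (A : 'M[C]_(m, k)) (B : 'M[C]_(k, l)) :
  adjmx (A *m B) = adjmx B *m adjmx A.
Proof. by rewrite /adjmx map_mxM trmx_mul. Qed.

Lemma adjmxK m k (A : 'M[C]_(m, k)) : adjmx (adjmx A) = A.
Proof. by apply/matrixP => i j; rewrite !mxE conjcK. Qed.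

Lemma adjmxD m k (A B : 'M[C]_(m, k)) : adjmx (A + B) = adjmx A + adjmx B.
Proof. by apply/matrixP => i j; rewrite !mxE rmorphD. Qed.

Lemma adjmxN m k (A : 'M[C]_(m, k)) : adjmx (- A) = - adjmx A.
Proof. by apply/matrixP => i j; rewrite !mxE rmorphN. Qed.

Lemma mxtrace_adjmx m (A : 'M[C]_m) : \tr (adjmx A) = (\tr A)^*.
Proof. by rewrite rmorph_sum; apply: eq_bigr => i _; rewrite !mxE. Qed.

Lemma mxtrace1x1 (A : 'M[C]_1) : \tr A = A 0 0.
Proof. exact: big_ord1. Qed.

Definition frob2 m k (A : 'M[C]_(m, k)) : C := \sum_i \sum_j `|A i j| ^+ 2.

Lemma frob2_ge0 m k (A : 'M[C]_(m, k)) : 0 <= frob2 A.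
Proof. by do 2!apply: sumr_ge0 => ? _; rewrite exprn_ge0. Qed.

Lemma frob2_tr m k (A : 'M[C]_(m, k)) : frob2 A = \tr (adjmx A *m A).
Proof.
rewrite /frob2 exchange_big; apply: eq_bigr => j _; rewrite mxE.
by apply: eq_bigr => i _; rewrite !mxE normcK mulrC.
Qed.

Lemma frob2_unitary m k (U : 'M[C]_m) (A : 'M[C]_(m, k)) :
  unitary U -> frob2 (U *m A) = frob2 A.
Proof. by move=> hU; rewrite !frob2_tr adjmx_mul mulmxA -(mulmxA _ _ U) hU mulmx1. Qed.

Lemma frob2B m k (A B : 'M[C]_(m, k)) :
  frob2 (A - B) = frob2 A + frob2 B - (\tr (adjmx A *m B) + \tr (adjmx B *m A)).
Proof.
rewrite !frob2_tr adjmxD adjmxN mulmxDl mulmxDr mulmxDr !mulNmx !mulmxN opprK.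
by rewrite !mxtraceD !raddfN /=; ring.
Qed.

Lemma frob2_mul_le m k l (A : 'M[C]_(m, k)) (B : 'M[C]_(k, l)) :
  frob2 (A *m B) <= frob2 A * frob2 B.
Proof.
rewrite /frob2 mulr_suml; apply: ler_sum => i _.
rewrite [in leRHS]exchange_big mulr_sumr; apply: ler_sum => j _; rewrite mxE.
exact: sqr_norm_sum_mul_le.
Qed.

Lemma frob_sqr m k (A : 'M[C]_(m, k)) : frob A ^+ 2 = frob2 A.
Proof. exact: sqrtCK. Qed.

Lemma frob_ge0 m k (A : 'M[C]_(m, k)) : 0 <= frob A.
Proof. by rewrite sqrtC_ge0 frob2_ge0. Qed.

Lemma expect_tr d (v : 'cV[C]_d) P : expect v P = \tr (adjmx v *m P *m v).
Proof. by rewrite mxtrace1x1. Qed.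

Lemma expect_proj d (v : 'cV[C]_d) P : expect v P = \tr (P *m proj v).
Proof. by rewrite expect_tr -mulmxA mxtrace_mulC mulmxA. Qed.

Lemma expect_real d (v : 'cV[C]_d) P : adjmx P = P -> expect v P \is Num.real.
Proof.
move=> hP; rewrite CrealE; change ((expect v P)^* == expect v P).
by rewrite expect_tr -mxtrace_adjmx !adjmx_mul adjmxK hP mulmxA.
Qed.

Lemma expectN d (v : 'cV[C]_d) P : expect v (- P) = - expect v P.
Proof. by rewrite !expect_tr mulmxN mulNmx raddfN. Qed.

Lemma expect_le_frob2 d (v : 'cV[C]_d) P :
  adjmx P = P -> P *m P = 1%:M -> expect v P <= frob2 v.
Proof.
move=> hP hPP; have hU : unitary P by rewrite /unitary hP.
(* 0 <= ||P v - v||^2 = 2 ||v||^2 - 2 <v|P|v> *)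
have := frob2_ge0 (P *m v - v).
rewrite frob2B frob2_unitary // adjmx_mul hP mulmxA -expect_tr.
by rewrite -!mulr2n -mulrnBl pmulrn_lge0 // subr_ge0.
Qed.

Lemma proj_adj d (v : 'cV[C]_d) : adjmx (proj v) = proj v.
Proof. by rewrite adjmx_mul adjmxK. Qed.

Lemma mxtrace_proj_mul d (v w : 'cV[C]_d) :
  \tr (proj v *m proj w) = \tr (adjmx v *m w) * \tr (adjmx w *m v).
Proof.
rewrite /proj mulmxA mxtrace_mulC !mulmxA !mxtrace1x1 -mulmxA [LHS]mxE big_ord1.
exact: mulrC.
Qed.

Lemma frob2_proj d (v : 'cV[C]_d) : frob2 (proj v) = frob2 v ^+ 2.
Proof. by rewrite frob2_tr proj_adj mxtrace_proj_mul -frob2_tr. Qed.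

Lemma frob2_projB_le d (v w : 'cV[C]_d) : frob2 v = 1 -> frob2 w = 1 ->
  frob2 (proj v - proj w) <= 2 * frob2 (v - w).
Proof.
move=> hv hw; rewrite !frob2B !proj_adj !mxtrace_proj_mul !frob2_proj hv hw expr1n.
set z := \tr (adjmx w *m v).
have -> : \tr (adjmx v *m w) = z^* by rewrite -mxtrace_adjmx adjmx_mul adjmxK.
rewrite -subr_ge0.
have -> : 2 * (1 + 1 - (z^* + z)) - (1 + 1 - (z^* * z + z * z^*)) =
    2 * ((1 - z) * (1 - z)^*) by rewrite rmorphB rmorph1; ring.
by rewrite mulr_ge0 ?ler0n //; exact: mul_conjC_ge0.
Qed.

Lemma frob2_ket0 n : frob2 (ket0 R n) = 1.
Proof.
have n0 : (0 < 2 ^ n)%N by rewrite expn_gt0.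
rewrite /frob2 (bigD1 (Ordinal n0)) //= big_ord1 mxE eqxx normr1 expr1n.
rewrite big1 ?addr0 // => i neq_i0; rewrite big_ord1 mxE ifN ?normr0 ?expr0n //.
Qed.

Lemma frob2_stab_state n (psi : 'cV[C]_(2 ^ n)) : stab_state psi -> frob2 psi = 1.
Proof. by case=> U [[hU _] ->]; rewrite frob2_unitary // frob2_ket0. Qed.

End ComplexMatrices.

Section Pauli.
Variable R : realType.
Local Notation C := R[i].

Ltac case_pauli a := case: a => [[|[|[|[|?]]]] ?] //=.
Ltac case_bit x := case: x => [[|[|?]] ?] //=.
Ltac complex_ring := apply/eqP; rewrite eq_complex /=; apply/andP; split; apply/eqP; ring.

Lemma pauli1_conj (a : 'I_4) (x y : 'I_2) : (pauli1 R a x y)^* = pauli1 R a y x.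
Proof.
rewrite !mxE; case_pauli a; case_bit x; case_bit y;
  by apply/eqP; rewrite eq_complex /= ?oppr0 ?opprK ?eqxx.
Qed.

Lemma pauli1_sq (a : 'I_4) : pauli1 R a *m pauli1 R a = 1%:M.
Proof.
apply/matrixP => x y; rewrite !mxE !big_ord_recr big_ord0 /= !mxE.
by case_pauli a; case_bit x; case_bit y; complex_ring.
Qed.

Lemma pauli1_compl (x y z w : 'I_2) :
  \sum_(a < 4) pauli1 R a x y * (pauli1 R a z w)^* = 2 * ((x == z) && (y == w))%:R.
Proof.
rewrite !big_ord_recr big_ord0 /= !mxE /=.
by case_bit x; case_bit y; case_bit z; case_bit w; complex_ring.
Qed.

Lemma pauli1_id : pauli1 R 0 = 1%:M.
Proof. by apply/matrixP => x y; rewrite !mxE /=; case: eqP. Qed.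

Lemma pauliE n (s : {ffun 'I_n -> 'I_4}) : pauli R s = kronmx (fun k => pauli1 R (s k)).
Proof. by []. Qed.

Lemma pauli_sq n (s : {ffun 'I_n -> 'I_4}) : pauli R s *m pauli R s = 1%:M.
Proof.
by rewrite pauliE kronmx_mul -(kronmx1 _ n); apply: eq_kronmx => k; apply: pauli1_sq.
Qed.

Lemma adjmx_pauli n (s : {ffun 'I_n -> 'I_4}) : adjmx (pauli R s) = pauli R s.
Proof.
apply/matrixP => i j; rewrite !mxE rmorph_prod.
by apply: eq_bigr => k _; exact: pauli1_conj.
Qed.

Lemma pauli_id n : pauli R [ffun _ : 'I_n => 0] = 1%:M.
Proof. by rewrite pauliE -(kronmx1 _ n); apply: eq_kronmx => k; rewrite ffunE pauli1_id. Qed.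

Lemma pauli_compl n (i j k l : 'I_(2 ^ n)) :
  \sum_(s : {ffun 'I_n -> 'I_4}) pauli R s i j * (pauli R s k l)^* =
  (2 ^ n)%:R * ((i == k) && (j == l))%:R.
Proof.
under eq_bigr => s _ do rewrite !mxE rmorph_prod -big_split /=.
rewrite -(bigA_distr_bigA (fun q a => pauli1 R a (qbit i q) (qbit j q) *
              (pauli1 R a (qbit k q) (qbit l q))^*)) /=.
under eq_bigr => q _ do rewrite pauli1_compl.
rewrite big_split /= prodr_const card_ord natrX -mulnb natrM -!prod_qbit_eq -big_split /=.
by congr (_ * _); apply: eq_bigr => q _; rewrite -natrM mulnb.
Qed.

Lemma pauli_parseval n (X : 'M[C]_(2 ^ n)) :
  \sum_s `|\tr (pauli R s *m X)| ^+ 2 = (2 ^ n)%:R * frob2 X.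
Proof.
pose Y (p : 'I_(2 ^ n) * 'I_(2 ^ n)) := X p.2 p.1.
have trE s : \tr (pauli R s *m X) = \sum_p pauli R s p.1 p.2 * Y p.
  rewrite -(pair_bigA _ (fun i j => pauli R s i j * X j i)).
  by apply: eq_bigr => i _; rewrite mxE.
have -> : frob2 X = \sum_p Y p * (Y p)^*.
  rewrite /frob2 exchange_big -(pair_bigA _ (fun j i => X i j * (X i j)^*)).
  by apply: eq_bigr => j _; apply: eq_bigr => i _; rewrite normcK.
under eq_bigr => s _ do rewrite trE normcK rmorph_sum big_distrlr /=.
rewrite exchange_big mulr_sumr; apply: eq_bigr => p _.
rewrite exchange_big (bigD1 p) //= [X in _ + X]big1 ?addr0 => [|q neq_qp].
  under eq_bigr => s _ do rewrite rmorphM mulrACA.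
  by rewrite -mulr_suml pauli_compl !eqxx mulr1 mulrC.
under eq_bigr => s _ do rewrite rmorphM mulrACA.
rewrite -mulr_suml pauli_compl (_ : _ && _ = false) ?mulr0 ?mul0r //.
by rewrite -xpair_eqE -!surjective_pairing eq_sym (negbTE neq_qp).
Qed.

End Pauli.

Lemma norm_mean_le (F : numFieldType) (T : eqType) (S : seq T) (f : T -> F) (K : F) :
  0 <= K -> (forall x, x \in S -> `|f x| <= K) ->
  `|(size S)%:R^-1 * \sum_(x <- S) f x| <= K.
Proof.
case: S => [|x S] K0 fK; first by rewrite big_nil mulr0 normr0.
rewrite normrM ger0_norm ?invr_ge0 // ler_pdivrMl ?ltr0Sn //.
apply: le_trans (ler_norm_sum _ _ _) _.
rewrite big_seq (le_trans (ler_sum _ fK)) // -big_seq big_const_seq count_predT.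
by rewrite iter_addr_0 mulr_natl.
Qed.

Section LinearStabilizerEntropy.
Variable R : realType.
Local Notation C := R[i].

Lemma sqr_norm_real_complex (x : R) : `|x%:C| ^+ 2 = (x ^+ 2)%:C :> C.
Proof. by rewrite -add_Re2_Im2 /= expr0n addr0. Qed.

Definition pauli_expect n (v : 'cV[C]_(2 ^ n)) (s : {ffun 'I_n -> 'I_4}) : R :=
  complex.Re (expect v (pauli R s)).

Lemma pauli_expectE n (v : 'cV[C]_(2 ^ n)) s : expect v (pauli R s) = (pauli_expect v s)%:C.
Proof. by rewrite RRe_real // expect_real // adjmx_pauli. Qed.

Lemma pauli_expect_id n (v : 'cV[C]_(2 ^ n)) : frob2 v = 1 -> pauli_expect v [ffun => 0] = 1.
Proof.
move=> hv; apply: complexI; rewrite -pauli_expectE pauli_id expect_tr mulmx1 -frob2_tr hv.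
by rewrite rmorph1.
Qed.

Lemma pauli_expect_sqr_le1 n (v : 'cV[C]_(2 ^ n)) s :
  frob2 v = 1 -> pauli_expect v s ^+ 2 <= 1.
Proof.
move=> hv.
have le1 : expect v (pauli R s) <= 1.
  by rewrite -hv; apply: expect_le_frob2; rewrite ?adjmx_pauli ?pauli_sq.
have ge1 : expect v (- pauli R s) <= 1.
  rewrite -hv; apply: expect_le_frob2; rewrite ?adjmxN ?adjmx_pauli //.
  by rewrite mulNmx mulmxN opprK pauli_sq.
move: le1 ge1; rewrite expectN !lecE => /andP[_ le1] /andP[_ ge1].
rewrite /pauli_expect; move: le1 ge1; case: (expect v _) => a b /= le1 ge1; nra.
Qed.

Lemma sum_pauli_expect_sqr n (v : 'cV[C]_(2 ^ n)) :
  frob2 v = 1 -> \sum_s pauli_expect v s ^+ 2 = (2 ^ n)%:R.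
Proof.
move=> hv; have := pauli_parseval (proj v).
under eq_bigr do rewrite -expect_proj pauli_expectE sqr_norm_real_complex.
rewrite frob2_proj hv expr1n mulr1 -rmorph_sum -(rmorph_nat (real_complex R)).
exact: complexI.
Qed.

Lemma sum_pauli_expectB_sqr n (v w : 'cV[C]_(2 ^ n)) :
  (\sum_s (pauli_expect v s - pauli_expect w s) ^+ 2)%:C =
  (2 ^ n)%:R * frob2 (proj v - proj w).
Proof.
rewrite rmorph_sum -pauli_parseval; apply: eq_bigr => s _ /=.
by rewrite mulmxBr raddfB /= -!expect_proj !pauli_expectE -rmorphB sqr_norm_real_complex.
Qed.

Lemma sum_pauli_expectB_sqr_le n (psi : 'cV[C]_(2 ^ n)) (U V : 'M[C]_(2 ^ n)) :
  frob2 psi = 1 -> unitary U -> unitary V ->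
  (\sum_s (pauli_expect (U *m psi) s - pauli_expect (V *m psi) s) ^+ 2)%:C
    <= 2 * (2 ^ n)%:R * frob2 (U - V).
Proof.
move=> hpsi hU hV; have hUpsi : frob2 (U *m psi) = 1 by rewrite frob2_unitary.
have hVpsi : frob2 (V *m psi) = 1 by rewrite frob2_unitary.
rewrite sum_pauli_expectB_sqr [2 * _]mulrC -mulrA ler_wpM2l ?ler0n //.
rewrite (le_trans (frob2_projB_le hUpsi hVpsi)) // ler_wpM2l ?ler0n // -mulmxBl.
by rewrite (le_trans (frob2_mul_le _ _)) // hpsi mulr1.
Qed.

Lemma MlinE n (v : 'cV[C]_(2 ^ n)) :
  Mlin v = (1 - (2 ^ n)%:R^-1 * \sum_s pauli_expect v s ^+ 4)%:C.
Proof.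
rewrite rmorphB rmorph1 rmorphM fmorphV rmorph_nat rmorph_sum /Mlin.
by congr (1 - _ * _); apply: eq_bigr => s _; rewrite pauli_expectE rmorphXn.
Qed.

Lemma Mlin_lipschitz n (psi : 'cV[C]_(2 ^ n)) (U V : 'M[C]_(2 ^ n)) :
  frob2 psi = 1 -> unitary U -> unitary V ->
  `|Mlin (U *m psi) - Mlin (V *m psi)|
    <= 8 * (2 ^ n)%:R / (4 + (2 ^ n)%:R) * frob (U - V).
Proof.
move=> hpsi hU hV; set phi := U *m psi; set chi := V *m psi.
have hphi : frob2 phi = 1 by rewrite frob2_unitary.
have hchi : frob2 chi = 1 by rewrite frob2_unitary.
set a := pauli_expect phi; set b := pauli_expect chi; set d : R := (2 ^ n)%:R.
have hd : 1 <= d by rewrite ler1n expn_gt0.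
have [F F_ge0 FE] : exists2 F : R, 0 <= F & frob2 (U - V) = F%:C.
  exists (complex.Re (frob2 (U - V))); last by rewrite RRe_real ?ger0_real ?frob2_ge0.
  by rewrite -ler0c RRe_real ?ger0_real ?frob2_ge0.
have dist_le : \sum_s (a s - b s) ^+ 2 <= 2 * d * F.
  by rewrite -lecR !rmorphM !rmorph_nat /= -FE sum_pauli_expectB_sqr_le.
have D_le : (\sum_s (a s ^+ 4 - b s ^+ 4)) ^+ 2 <= 8 * (d - 1) * d * F.
  have quartic := sum_subX4_sqr_le (pauli_expect_id hphi) (pauli_expect_id hchi)
    (fun s => pauli_expect_sqr_le1 s hphi) (fun s => pauli_expect_sqr_le1 s hchi)
    (sum_pauli_expect_sqr hphi) (sum_pauli_expect_sqr hchi).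
  apply: (le_trans quartic).
  rewrite (_ : 8 * _ * _ * _ = 4 * (d - 1) * (2 * d * F)); last by ring.
  by apply: ler_wpM2l => //; rewrite mulr_ge0 // subr_ge0.
have K_ge0 : 0 <= 8 * d / (4 + d) by rewrite divr_ge0 ?addr_ge0 ?mulr_ge0 ?ler0n.
have -> : 8 * (2 ^ n)%:R / (4 + (2 ^ n)%:R) = (8 * d / (4 + d))%:C :> C.
  by rewrite rmorphM fmorphV rmorphD rmorphM !rmorph_nat.
rewrite !MlinE -rmorphB.
rewrite -(ler_pXn2r (ltn0Sn 1)) ?nnegrE ?normr_ge0 ?mulr_ge0 ?frob_ge0 ?ler0c //.
rewrite sqr_norm_real_complex exprMn frob_sqr FE -rmorphXn -rmorphM lecR -/a -/b -/d.
have -> : 1 - d^-1 * \sum_s a s ^+ 4 - (1 - d^-1 * \sum_s b s ^+ 4) =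
    - ((\sum_s (a s ^+ 4 - b s ^+ 4)) / d) by rewrite sumrB; ring.
by rewrite sqrrN; exact: (lipschitz_const_sqr_le hd F_ge0 D_le).
Qed.

End LinearStabilizerEntropy.

Theorem mainTheorem10 (R : realType) (n : nat) (S : seq 'cV[R[i]]_(2 ^ n))
  (U V : 'M[R[i]]_(2 ^ n)) :
  (1 <= n)%N -> enum_STAB S -> unitary U -> unitary V ->
  `|MlinU S U - MlinU S V|
    <= (8 * (2 ^ n)%:R / (4 + (2 ^ n)%:R)) * frob (U - V).
Proof.
move=> _ [stab _ _] hU hV; rewrite /MlinU -mulrBr -sumrB.
apply: norm_mean_le => [|psi /stab/frob2_stab_state hpsi].
  by rewrite mulr_ge0 ?frob_ge0 // divr_ge0 ?addr_ge0 ?mulr_ge0 ?ler0n.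
exact: Mlin_lipschitz.
Qed.
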